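(* Let $T,\ell$ be positive integers, $\sigma\in(0,1]$, $w\in(0,1]$ and $\delta\in(0,1)$. Let $\mathcal{J}$ be the set of all intervals of width at most $w$ contained in $[0,1]$. For $i\in[T]$, $j\in[\ell]$ let $d_{i,j}$ be drawn from a $T\ell$-step adaptive sequence of $\sigma$-smooth distributions over $[0,1]$. Then with probability at least $1-\delta$, $$\max_{J\in\mathcal{J}}\sum_{i\in[T],\,j\in[\ell]}\mathbb{I}[d_{i,j}\in J]<\frac{T\ell w}{\sigma}\ln\!\left(\frac{2T\ell}{\delta}\right)+10\sqrt{\frac{T\ell w}{\sigma}\ln\!\left(\frac{2T\ell}{\delta}\right)\ln\!\left(\frac1\delta\right)}+10\log\!\left(\frac{10T\ell\log(2T\ell/\delta)}{\sigma\delta}\right).$$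
   Context: A distribution $\mu$ on $[0,1]$ is $\sigma$-smooth if $\mu(A)\le\mathcal{U}(A)/\sigma$ for all measurable $A$, where $\mathcal{U}$ is the uniform distribution on $[0,1]$. A $T\ell$-step adaptive sequence of $\sigma$-smooth distributions generates the $T\ell$ points one at a time, each drawn from a $\sigma$-smooth distribution chosen as a function of the previously realized points. *)

From HB Require Import structures.
From mathcomp Require Import all_boot all_order all_algebra.
From mathcomp Require Import all_classical all_reals all_analysis measurable_realfun.
Set Implicit Arguments. Unset Strict Implicit. Unset Printing Implicit Defensive.
Import Order.TTheory GRing.Theory Num.Theory.
Import numFieldNormedType.Exports.
Local Open Scope classical_set_scope.
Local Open Scope ring_scope.

(* An adaptive policy over N steps: at step k, given the k previously
   realized points (as a k-tuple, in generation order), it chooses a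
   probability distribution on R (Borel sets). *)
Definition policy (R : realType) := forall k : nat, k.-tuple R -> probability R R.

Definition unif01 (R : realType) (A : set R) : \bar R :=
  (@lebesgue_measure R) (A `&` `[0%R, 1%R]).

(* sigma-smooth distribution on [0,1]: mu(A) <= U(A)/sigma for all measurable A
   (this forces mu to be supported on [0,1]). *)
Definition smooth (R : realType) (sigma : R) (mu : probability R R) : Prop :=
  forall A : set R, measurable A -> (mu A <= (sigma^-1)%:E * unif01 A)%E.

(* A policy is an N-step adaptive sequence of sigma-smooth distributions:
   every chosen distribution is sigma-smooth, and the choice depends
   measurably on the history (i.e. each step is a Markov kernel). *)
Definition adaptive_smooth (R : realType) (sigma : R) (N : nat) (P : policy R) : Prop :=
  (forall k (h : k.-tuple R), (k < N)%N -> smooth sigma (P k h)) /\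
  (forall k (A : set R), (k < N)%N -> measurable A ->
      measurable_fun [set: k.-tuple R] (fun h => P k h A)).

(* Iterated integral: starting from history h (length k), draw n more points
   adaptively according to P and integrate f over the full realized sequence. *)
Fixpoint adapt_int (R : realType) (P : policy R) (n : nat)
    (f : seq R -> \bar R) (k : nat) (h : k.-tuple R) {struct n} : \bar R :=
  match n with
  | 0 => f h
  | n'.+1 => (\int[P k h]_x adapt_int P n' f [tuple of rcons h x])%E
  end.

Definition adapt_prob (R : realType) (P : policy R) (N : nat) (E : set (seq R)) : \bar R :=
  adapt_int P N (fun s => (\1_E s)%:E) [tuple].

Definition count_in (R : realType) (J : interval R) (s : seq R) : nat :=
  count (fun x => x \in J) s.

Definition small_interval (R : realType) (w : R) (J : interval R) : Prop :=
  [set` J] `<=` `[0%R, 1%R] /\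
  (forall x y, x \in J -> y \in J -> `|x - y| <= w).

From HB Require Import structures.
From mathcomp Require Import all_boot all_order all_algebra.
From mathcomp Require Import all_classical all_reals all_analysis measurable_realfun.
From mathcomp Require Import ring lra.
Import Order.TTheory GRing.Theory Num.Theory.
Import numFieldNormedType.Exports.
Local Open Scope classical_set_scope.
Local Open Scope ring_scope.
Set Implicit Arguments. Unset Strict Implicit. Unset Printing Implicit Defensive.

(* Every interval of width at most [w] in [0,1] lies in one of [K] overlapping
   grid cells [[k g, k g + g + w]], and a sigma-smooth distribution gives each
   cell mass at most [p = (g + w) / sigma].  The potential
   [(1 + p/8)^(points still to come) * sum_k (9/8)^(points in cell k)] is a
   nonnegative supermartingale of the adaptive process, so by Ville's inequality
   it stays below [M = (1 + p/8)^N K / delta] with probability at least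
   [1 - delta].  On that event every cell, hence every interval, holds fewer
   than [log_(9/8) M] points, and [log_(9/8) M] is below the stated bound. *)

(* No measurability is required: for nonnegative functions the integral is the
   supremum of the integrals of the simple functions below them. *)
Lemma ge0_le_integral_nonmeas d (T : measurableType d) (R : realType)
    (mu : {measure set T -> \bar R}) (f g : T -> \bar R) :
  (forall x, 0 <= f x)%E -> (forall x, f x <= g x)%E ->
  (\int[mu]_x f x <= \int[mu]_x g x)%E.
Proof.
move=> f0 fg; have g0 x : (0 <= g x)%E by exact: le_trans (f0 x) (fg x).
rewrite !ge0_integralTE //.
by apply: ereal_sup_le => _ [h hf <-]; exists h => //= x; exact: le_trans (hf x) (fg x).
Qed.

Section ProbabilityIntegrals.
Context d (T : measurableType d) (R : realType) (mu : probability T R).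

Lemma integral_cst_probability (a : R) : (\int[mu]_x a%:E = a%:E)%E.
Proof.
by rewrite integral_cst // [X in (_ * X)%E](_ : _ = 1%E) ?mule1 //; exact: probability_setT.
Qed.

Lemma integral_affine_indic (A : set T) (a b : R) : measurable A ->
  0 <= a -> 0 <= b ->
  (\int[mu]_x (a + b * \1_A x)%:E = a%:E + b%:E * mu A)%E.
Proof.
move=> mA a0 b0; under eq_integral do rewrite EFinD EFinM.
rewrite ge0_integralD //; last 2 first.
- by move=> x _; rewrite -EFinM lee_fin mulr_ge0.
- by apply/measurable_EFinP; apply: measurable_funM => //; exact: measurable_indic.
rewrite integral_cst_probability ge0_integralZl_EFin //.
- by rewrite integral_indic // setIT.
- by apply/measurable_EFinP; exact: measurable_indic.
Qed.

Lemma sub1_integral_le_max (f : T -> R) : measurable_fun setT f ->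
  (forall x, 0 <= f x) ->
  (1 - \int[mu]_x (f x)%:E <= \int[mu]_x (Num.max 0 (1 - f x))%:E)%E.
Proof.
move=> mf f0.
have mmax : measurable_fun setT (fun x => Num.max 0 (1 - f x)).
  by apply: measurable_maxr => //; exact: measurable_funB.
have max_le1 x : ((Num.max 0 (1 - f x))%:E <= 1)%E.
  by rewrite lee_fin ge_max ler01 /=; have := f0 x; lra.
rewrite lee_subel_addr; last first.
  rewrite ge0_fin_numE; last by apply: integral_ge0 => x _; rewrite lee_fin le_max lexx.
  apply: (le_lt_trans (y := 1%E)); last exact: ltey.
  rewrite -(integral_cst_probability 1); apply: ge0_le_integral_nonmeas => // x.
  by rewrite lee_fin le_max lexx.
rewrite -ge0_integralD //; last 4 first.
- by move=> x _; rewrite lee_fin le_max lexx.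
- exact/measurable_EFinP.
- by move=> x _; rewrite lee_fin.
- exact/measurable_EFinP.
rewrite -(integral_cst_probability 1); apply: ge0_le_integral_nonmeas => x.
  by rewrite lee01.
by rewrite -EFinD lee_fin -lerBlDr le_max lexx orbT.
Qed.

End ProbabilityIntegrals.

Lemma adapt_int_ge0 (R : realType) (P : policy R) n (f : seq R -> \bar R) :
  (forall s, 0 <= f s)%E -> forall k (h : k.-tuple R), (0 <= adapt_int P n f h)%E.
Proof.
move=> f0; elim: n => [|n IH] k h /=; first exact: f0.
by apply: integral_ge0 => x _; apply: IH.
Qed.

(* [V n s] is indexed by the number [n] of points still to be drawn after the
   history [s]. *)
Section AdaptiveVille.
Variables (R : realType) (P : policy R) (N : nat) (G : set (seq R)).
Variables (V : nat -> seq R -> R) (M : R).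
Hypothesis M_gt0 : 0 < M.
Hypothesis V_ge0 : forall n s, 0 <= V n s.
Hypothesis measurable_V_rcons :
  forall n s, measurable_fun setT (fun x => V n (rcons s x)).
Hypothesis V_supermartingale : forall n k (h : k.-tuple R), (k < N)%N ->
  (\int[P h]_x (V n (rcons h x))%:E <= (V n.+1 h)%:E)%E.
Hypothesis V_lt_mem : forall s, size s = N -> V 0 s < M -> G s.

Lemma adapt_int_indic_ge n k (h : k.-tuple R) : (k + n = N)%N ->
  ((1 - V n h / M)%:E <= adapt_int P n (fun s => (\1_G s)%:E) h)%E.
Proof.
move: k h; elim: n => [|n IH] k h /= kN.
  rewrite addn0 in kN; rewrite lee_fin indicE.
  have [Gh|nGh] := pselect (G h).
    by rewrite mem_set // lerBlDr lerDl divr_ge0 // ltW.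
  rewrite memNset // subr_le0 ler_pdivlMr // mul1r leNgt.
  by apply/negP => /(V_lt_mem (etrans (size_tuple h) kN)).
have kN' : (k < N)%N by rewrite -kN addnS ltnS leq_addr.
pose W x := V n (rcons h x) / M.
have mW : measurable_fun setT W by apply: measurable_funM.
have W_ge0 x : 0 <= W x by rewrite divr_ge0 // ltW.
have int_W : (\int[P h]_x (W x)%:E <= (V n.+1 h / M)%:E)%E.
  under eq_integral do rewrite /W mulrC EFinM.
  rewrite ge0_integralZl_EFin //; last 3 first.
  - by move=> x _; rewrite lee_fin.
  - exact/measurable_EFinP.
  - by rewrite invr_ge0 ltW.
  rewrite [V n.+1 h / M]mulrC EFinM; apply: lee_wpmul2l; last exact: V_supermartingale.
  by rewrite lee_fin invr_ge0 ltW.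
have max_le x : ((Num.max 0 (1 - W x))%:E <=
                 adapt_int P n (fun s => (\1_G s)%:E) [tuple of rcons h x])%E.
  rewrite EFin_max ge_max adapt_int_ge0 => [|s]; last by rewrite lee_fin.
  by apply: IH; rewrite addSnnS.
apply: le_trans (ge0_le_integral_nonmeas _ _ max_le); last first.
  by move=> x; rewrite lee_fin le_max lexx.
apply: le_trans (sub1_integral_le_max _ mW W_ge0).
by rewrite EFinB leeB.
Qed.

Lemma adapt_prob_ge_threshold : ((1 - V N [::] / M)%:E <= adapt_prob P N G)%E.
Proof. exact: (@adapt_int_indic_ge N 0 [tuple]). Qed.

End AdaptiveVille.

Definition count_set (R : realType) (A : set R) (s : seq R) : nat :=
  count (fun x => x \in A) s.

Lemma count_set_rcons (R : realType) (A : set R) s x :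
  count_set A (rcons s x) = (count_set A s + (x \in A))%N.
Proof. by rewrite /count_set -cats1 count_cat /= addn0. Qed.

(* Each hit of [I k] multiplies the [k]-th summand by [1 + u]; since a step hits
   [I k] with probability at most [p], the factor [(1 + u p)^n] makes the
   potential a supermartingale. *)
Section HitPotential.
Variables (R : realType) (K : nat) (I : nat -> set R) (u p : R).
Hypotheses (u_ge0 : 0 <= u) (p_ge0 : 0 <= p).

Definition hit_potential (n : nat) (s : seq R) : R :=
  (1 + u * p) ^+ n * \sum_(k < K) (1 + u) ^+ count_set (I k) s.

Lemma hit_potential_ge0 n s : 0 <= hit_potential n s.
Proof.
rewrite mulr_ge0 ?exprn_ge0 ?addr_ge0 ?mulr_ge0 //.
by rewrite sumr_ge0 // => k _; rewrite exprn_ge0 ?addr_ge0.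
Qed.

Lemma hit_potential0_lt M s : hit_potential 0 s < M ->
  forall k, (k < K)%N -> (1 + u) ^+ count_set (I k) s < M.
Proof.
move=> VM k kK; apply: le_lt_trans VM; rewrite /hit_potential expr0 mul1r.
rewrite (bigD1 (Ordinal kK)) //= lerDl.
by rewrite sumr_ge0 // => i _; rewrite exprn_ge0 ?addr_ge0.
Qed.

Lemma hit_potential_rcons n s x : hit_potential n (rcons s x) =
  \sum_(k < K) ((1 + u * p) ^+ n * (1 + u) ^+ count_set (I k) s
                + (1 + u * p) ^+ n * (1 + u) ^+ count_set (I k) s * u * \1_(I k) x).
Proof.
rewrite /hit_potential big_distrr; apply: eq_bigr => k _.
rewrite count_set_rcons exprD indicE; case: (x \in I k) => /=; ring.
Qed.

Hypothesis measurable_I : forall k, measurable (I k).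

Lemma measurable_hit_potential_rcons n s :
  measurable_fun setT (fun x => hit_potential n (rcons s x)).
Proof.
under eq_fun do rewrite hit_potential_rcons.
apply: measurable_sum => k; apply: measurable_funD => //.
by apply: measurable_funM => //; exact: measurable_indic.
Qed.

Lemma integral_hit_potential_rcons (mu : probability R R) n s :
  (forall k, (mu (I k) <= p%:E)%E) ->
  (\int[mu]_x (hit_potential n (rcons s x))%:E <= (hit_potential n.+1 s)%:E)%E.
Proof.
move=> muI; under eq_integral do rewrite hit_potential_rcons -sumEFin.
pose a k := (1 + u * p) ^+ n * (1 + u) ^+ count_set (I k) s.
have a_ge0 k : 0 <= a k by rewrite mulr_ge0 ?exprn_ge0 ?addr_ge0 ?mulr_ge0.
rewrite ge0_integral_sum //; last 2 first.
- move=> k; apply/measurable_EFinP; apply: measurable_funD => //.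
  by apply: measurable_funM => //; exact: measurable_indic.
- move=> k x _; have := a_ge0 k; rewrite /a lee_fin => ak_ge0.
  apply: addr_ge0 => //; apply: mulr_ge0; first exact: mulr_ge0.
  by rewrite indicE.
have -> : hit_potential n.+1 s = \sum_(k < K) (a k + a k * u * p).
  by rewrite /hit_potential big_distrr; apply: eq_bigr => k _; rewrite /a /= exprS; ring.
rewrite -sumEFin; apply: lee_sum => k _.
have := a_ge0 k; rewrite /a /= => ak_ge0.
have aku_ge0 := mulr_ge0 ak_ge0 u_ge0.
rewrite integral_affine_indic // EFinD leeD2l // [in leRHS]EFinM.
by apply: lee_wpmul2l; rewrite ?lee_fin.
Qed.

End HitPotential.

Lemma smooth_itv_le (R : realType) (sigma a b : R) (mu : probability R R) :
  0 < sigma -> a <= b -> smooth sigma mu ->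
  (mu [set` `[a, b]] <= ((b - a) / sigma)%:E)%E.
Proof.
move=> sigma_gt0 ab mu_smooth.
apply: le_trans (mu_smooth _ (measurable_itv _)) _.
rewrite mulrC EFinM; apply: lee_wpmul2l; first by rewrite lee_fin invr_ge0 ltW.
apply: le_trans (measureIl _ _ _) _; try exact: measurable_itv.
rewrite -[leLHS]/(lebesgue_measure ([set` `[a, b]] : set R)).
by rewrite lebesgue_measure_itv /= lte_fin; case: ltgtP ab => // ->; rewrite subrr.
Qed.

Lemma small_interval_sub_itv (R : realType) (w : R) (J : interval R) :
  small_interval w J ->
  exists2 m, 0 <= m <= 1 & forall x, x \in J -> m <= x <= m + w.
Proof.
move=> [J01 J_diam].
have [[x0 Jx0]|J0] := pselect (exists x, x \in J); last first.
  by exists 0 => [|x Jx]; [rewrite lexx ler01 | exfalso; apply: J0; exists x].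
have in01 x : x \in J -> 0 <= x <= 1 by move=> Jx; have := J01 x Jx; rewrite /= in_itv.
have lbJ : lbound [set` J] 0 by move=> x /in01 /andP[].
have infJ : has_inf [set` J] by split; [exists x0 | exists 0].
have inf_le x : x \in J -> inf [set` J] <= x by apply: ge_inf; exists 0.
exists (inf [set` J]).
  have /andP[_ x01] := in01 _ Jx0.
  rewrite lb_le_inf //=; last by exists x0.
  exact: le_trans (inf_le _ Jx0) x01.
move=> x Jx; rewrite inf_le //=.
rewrite leNgt; apply/negP => ltx.
have e_gt0 : 0 < x - w - inf [set` J] by lra.
have [y Jy y_lt] := inf_adherent e_gt0 infJ.
have w_ge0 : 0 <= w by have := J_diam x0 x0 Jx0 Jx0; rewrite subrr normr0.
by have := J_diam x y Jx Jy; rewrite ger0_norm; lra.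
Qed.

Lemma exists_grid_index (R : realType) (g m : R) : 0 < g -> 0 <= m <= 1 ->
  exists2 k, (k < (Num.truncn g^-1).+1)%N & k%:R * g <= m < k%:R * g + g.
Proof.
move=> g_gt0 /andP[m_ge0 m_le1].
have mg_ge0 : 0 <= m / g by rewrite divr_ge0 // ltW.
have /andP[k_le k_gt] := truncn_itv mg_ge0.
exists (Num.truncn (m / g)).
  by rewrite ltnS le_truncn // -[leRHS]mul1r ler_wpM2r // invr_ge0 ltW.
rewrite -ler_pdivlMr // k_le /=.
by move: k_gt; rewrite ltr_pdivrMr // -natr1 mulrDl mul1r.
Qed.

Lemma ln_ge1BV (R : realType) (a x : R) : 0 < a -> a <= x -> 1 - a^-1 <= ln x.
Proof.
move=> a_gt0 ax; have x_gt0 := lt_le_trans a_gt0 ax.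
have xV_gt0 : 0 < x^-1 by rewrite invr_gt0.
have xV_le : x^-1 <= a^-1 by rewrite lef_pV2 ?posrE.
have := @le_ln1Dx R (x^-1 - 1) ltac:(lra).
by rewrite addrC subrK lnV ?posrE //; lra.
Qed.

Section Grid.
Variables (R : realType) (N : nat) (sigma w delta : R).

(* The [w / 100] part keeps the cells barely longer than [w]; the [sigma / N]
   part keeps their number below [2 N / sigma]. *)
Definition grid_step : R := w / 100 + sigma / N%:R.

Definition grid_cell (k : nat) : set R :=
  [set` `[k%:R * grid_step, k%:R * grid_step + (grid_step + w)]].

Definition grid_size : nat := (Num.truncn grid_step^-1).+1.

Definition cell_mass : R := (grid_step + w) / sigma.

Definition hit_threshold : R :=
  (1 + 8^-1 * cell_mass) ^+ N * grid_size%:R / delta.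

Definition deviation_bound : R :=
  N%:R * w / sigma * ln (2 * N%:R / delta)
  + 10 * Num.sqrt (N%:R * w / sigma * ln (2 * N%:R / delta) * ln (1 / delta))
  + 10 * ln (10 * N%:R * ln (2 * N%:R / delta) / (sigma * delta)).

Hypotheses (N_gt0 : (0 < N)%N) (sigma_gt0 : 0 < sigma) (sigma_le1 : sigma <= 1).
Hypotheses (w_gt0 : 0 < w) (delta_gt0 : 0 < delta) (delta_lt1 : delta < 1).

Let N_gt0R : 0 < N%:R :> R. Proof. by rewrite ltr0n. Qed.

Lemma grid_step_gt0 : 0 < grid_step.
Proof. by rewrite addr_gt0 ?divr_gt0. Qed.

Lemma cell_mass_ge0 : 0 <= cell_mass.
Proof. by rewrite divr_ge0 ?ltW // addr_gt0 ?grid_step_gt0. Qed.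

Lemma hit_factor_ge1 : 1 <= 1 + 8^-1 * cell_mass.
Proof. by rewrite lerDl mulr_ge0 ?cell_mass_ge0. Qed.

Lemma hit_threshold_gt0 : 0 < hit_threshold.
Proof.
have c_gt0 := lt_le_trans ltr01 hit_factor_ge1.
by rewrite divr_gt0 // mulr_gt0 ?exprn_gt0 ?ltr0n.
Qed.

Lemma smooth_grid_cell_le (mu : probability R R) k : smooth sigma mu ->
  (mu (grid_cell k) <= cell_mass%:E)%E.
Proof.
move=> mu_smooth; apply: le_trans (smooth_itv_le _ _ mu_smooth) _ => //.
  by rewrite lerDl addr_ge0 ?ltW ?grid_step_gt0.
by rewrite /cell_mass addrAC subrr add0r.
Qed.

Lemma small_interval_sub_grid_cell (J : interval R) : small_interval w J ->
  exists2 k, (k < grid_size)%N & {subset J <= grid_cell k}.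
Proof.
move=> /small_interval_sub_itv [m m01 Jm].
have [k k_lt /andP[km mk]] := exists_grid_index grid_step_gt0 m01.
exists k => // x /Jm /andP[mx xm]; rewrite inE /grid_cell /= in_itv /=.
by apply/andP; split; move: (w_gt0); lra.
Qed.

Let hits := N%:R * w / sigma.
Let L := ln (2 * N%:R / delta).
Let X := 2 * N%:R / (sigma * delta).

Lemma grid_size_le : grid_size%:R <= 2 * N%:R / sigma.
Proof.
have g_gt0 := grid_step_gt0.
have step_ge : sigma / N%:R <= grid_step by rewrite lerDr divr_ge0 // ltW.
have stepV_le : grid_step^-1 <= N%:R / sigma.
  by rewrite -invf_div lef_pV2 ?posrE ?divr_gt0.
have trunc_le : (Num.truncn grid_step^-1)%:R <= grid_step^-1.
  by rewrite truncn_le invr_ge0 ltW.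
have one_le : 1 <= N%:R / sigma.
  by rewrite ler_pdivlMr // mul1r (le_trans sigma_le1) // ler1n.
by rewrite /grid_size -natr1 -mulrA; lra.
Qed.

Lemma N_cell_mass : N%:R * cell_mass = hits / 100 + 1 + hits.
Proof. by rewrite /cell_mass /grid_step /hits; field; rewrite !gt_eqF. Qed.

Lemma X_ge1 : 1 <= X.
Proof.
have sd_le1 : sigma * delta <= 1 by apply: mulr_ile1 => //; apply: ltW.
have N_ge1 : 1 <= N%:R :> R by rewrite ler1n.
by rewrite ler_pdivlMr ?mulr_gt0 // mul1r; lra.
Qed.

Lemma ln_hit_threshold_le : ln hit_threshold <= (hits / 100 + 1 + hits) / 8 + ln X.
Proof.
have m_ge0 := cell_mass_ge0.
have u_ge0 : 0 <= 8^-1 * cell_mass by rewrite mulr_ge0.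
have K_gt0 : 0 < grid_size%:R :> R by rewrite ltr0n.
have lnc_le : ln (1 + 8^-1 * cell_mass) <= 8^-1 * cell_mass by apply: le_ln1Dx; lra.
have lnK_le : ln (grid_size%:R / delta) <= ln X.
  rewrite ler_ln ?posrE ?divr_gt0 ?mulr_gt0 // /X invfM mulrA ler_pM2r ?invr_gt0 //.
  exact: grid_size_le.
have c_gt0 : 0 < 1 + 8^-1 * cell_mass by lra.
have Kd_gt0 : 0 < grid_size%:R / delta by rewrite divr_gt0.
rewrite /hit_threshold -mulrA lnM ?posrE ?exprn_gt0 // lnXn // -[_ *+ N]mulr_natl.
have Nlnc_le := ler_wpM2l (ler0n R N) lnc_le.
have : N%:R * (8^-1 * cell_mass) = (hits / 100 + 1 + hits) / 8.
  by rewrite -N_cell_mass; ring.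
lra.
Qed.

Lemma ln_double_le n : (0 < n <= N)%N -> ln (2 * n%:R) <= L.
Proof.
move=> /andP[n_gt0 nN]; have n_gt0R : 0 < n%:R :> R by rewrite ltr0n.
rewrite ler_ln ?posrE ?mulr_gt0 ?invr_gt0 //.
have nd_le : n%:R * delta <= n%:R by rewrite -[leRHS]mulr1 ler_wpM2l ?ltW.
have nN_le : n%:R <= N%:R :> R by rewrite ler_nat.
by rewrite ler_pdivlMr //; lra.
Qed.

Lemma L_ge_half : 1 / 2 <= L.
Proof.
have := @ln_ge1BV R 2 2 ltac:(lra) (lexx _); have := @ln_double_le 1 N_gt0.
by rewrite mulr1; lra.
Qed.

Lemma deviation_bound_ge :
  hits * L + 10 * ln (5 * L) + 10 * ln X <= deviation_bound.
Proof.
have L_ge := L_ge_half.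
have split_ln : ln (10 * N%:R * L / (sigma * delta)) = ln (5 * L) + ln X.
  rewrite -lnM ?posrE ?divr_gt0 ?mulr_gt0 //; last by lra.
  by congr ln; rewrite /X; field; rewrite !gt_eqF ?mulr_gt0.
have := sqrtr_ge0 (hits * L * ln (1 / delta)).
by rewrite /deviation_bound -/hits -/L split_ln; lra.
Qed.

Lemma hits_ge0 : 0 <= hits.
Proof. by rewrite divr_ge0 ?mulr_ge0 ?ltW. Qed.

Lemma ln_X_ge0 : 0 <= ln X.
Proof. exact/ln_ge0/X_ge1. Qed.

Lemma deviation_bound_gt3 : 3 < deviation_bound.
Proof.
have L_ge := L_ge_half; have L_ge0 : 0 <= L by lra.
have := ln_X_ge0; have := mulr_ge0 hits_ge0 L_ge0.
have := @ln_ge1BV R (5 / 2) (5 * L) ltac:(lra) ltac:(lra).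
have -> : (5 / 2 : R)^-1 = 2 / 5 by field.
have := deviation_bound_ge; lra.
Qed.

Lemma hit_threshold_ge1 : 1 <= hit_threshold.
Proof.
have c_ge1 := hit_factor_ge1.
have K_ge1 : 1 <= grid_size%:R :> R by rewrite ler1n.
rewrite ler_pdivlMr // mul1r (le_trans (ltW delta_lt1)) //.
by rewrite mulr_ege1 // exprn_ege1.
Qed.

Lemma log_hit_threshold_le : (4 <= N)%N ->
  ln hit_threshold / ln (1 + 8^-1) <= deviation_bound.
Proof.
move=> N_ge4.
have L_ge : 3 / 2 <= L.
  have := @ln_double_le 4 N_ge4; have := @ln_ge1BV R 2 2 ltac:(lra) (lexx _).
  have -> : 2 * 4%:R = 2 ^+ 3 :> R by rewrite !exprS expr0; lra.
  by rewrite lnXn // -mulr_natl; lra.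
have lnq_ge : 9^-1 <= ln (1 + 8^-1 : R).
  have := @ln_ge1BV R (1 + 8^-1) (1 + 8^-1) ltac:(lra) (lexx _).
  have -> : (1 + 8^-1 : R)^-1 = 1 - 9^-1 by field.
  lra.
have lnM_ge0 := ln_ge0 hit_threshold_ge1.
have lnM_le : ln hit_threshold / ln (1 + 8^-1) <= 9 * ln hit_threshold.
  rewrite ler_pdivrMr; last by apply: lt_le_trans lnq_ge; rewrite invr_gt0.
  have : 1 <= 9 * ln (1 + 8^-1 : R) by lra.
  by move/(ler_wpM2l lnM_ge0); rewrite mulr1; lra.
have := @ln_ge1BV R (15 / 2) (5 * L) ltac:(lra) ltac:(lra).
have -> : (15 / 2 : R)^-1 = 2 / 15 by field.
have := ler_wpM2l hits_ge0 L_ge.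
have := ln_hit_threshold_le; have := deviation_bound_ge; have := hits_ge0.
lra.
Qed.

Lemma count_in_lt_deviation_bound (s : seq R) : size s = N ->
  (forall k, (k < grid_size)%N ->
     (1 + 8^-1) ^+ count_set (grid_cell k) s < hit_threshold) ->
  forall J : interval R, small_interval w J ->
  (count_in J s)%:R < deviation_bound.
Proof.
move=> size_s cell_hits_lt J J_small.
have [N_le3|N_ge4] := leqP N 3.
  apply: le_lt_trans deviation_bound_gt3.
  by rewrite (ler_nat R _ 3) (leq_trans _ N_le3) // -size_s count_size.
have [k k_lt J_sub] := small_interval_sub_grid_cell J_small.
apply: (@le_lt_trans _ _ (count_set (grid_cell k) s)%:R).
  by rewrite ler_nat; exact: sub_count.
apply: lt_le_trans (log_hit_threshold_le N_ge4).
have lnq_gt0 : 0 < ln (1 + 8^-1 : R) by rewrite ln_gt0 // ltrDl.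
rewrite ltr_pdivlMr // mulr_natl -lnXn ?ltr_ln ?posrE ?cell_hits_lt //.
exact: hit_threshold_gt0.
Qed.

Lemma hit_potential_threshold :
  hit_potential grid_size grid_cell 8^-1 cell_mass N [::] / hit_threshold = delta.
Proof.
rewrite /hit_potential /hit_threshold (eq_bigr (fun=> 1)) // sumr_const card_ord.
have c_gt0 := lt_le_trans ltr01 hit_factor_ge1.
by field; rewrite !gt_eqF ?ltr0n ?exprn_gt0.
Qed.

End Grid.

Unset Implicit Arguments.

Theorem mainTheorem8 (R : realType) (T l : nat) (sigma w delta : R)
  (P : policy R) :
  (0 < T)%N -> (0 < l)%N ->
  0 < sigma -> sigma <= 1 ->
  0 < w -> w <= 1 ->
  0 < delta -> delta < 1 ->
  adaptive_smooth sigma (T * l) P ->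
  ((1 - delta)%:E <=
   adapt_prob P (T * l)
     [set s | forall J : interval R, small_interval w J ->
        (((count_in J s)%:R : R) <
          (T * l)%:R * w / sigma * ln (2 * (T * l)%:R / delta)
          + 10 * Num.sqrt ((T * l)%:R * w / sigma * ln (2 * (T * l)%:R / delta)
                           * ln (1 / delta))
          + 10 * ln (10 * (T * l)%:R * ln (2 * (T * l)%:R / delta)
                     / (sigma * delta)))%R])%E.
Proof.
move=> T_gt0 l_gt0 sigma_gt0 sigma_le1 w_gt0 _ delta_gt0 delta_lt1 [P_smooth _].
have N_gt0 : (0 < T * l)%N by rewrite muln_gt0 T_gt0.
rewrite -{1}(hit_potential_threshold N_gt0 sigma_gt0 w_gt0 delta_gt0).
apply: (adapt_prob_ge_threshold (V := hit_potential (grid_size (T * l) sigma w)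
          (grid_cell (T * l) sigma w) 8^-1 (cell_mass (T * l) sigma w))).
- exact: hit_threshold_gt0.
- by move=> n s; apply: hit_potential_ge0 => //; exact: cell_mass_ge0.
- move=> n s; apply: measurable_hit_potential_rcons => k; exact: measurable_itv.
- move=> n k h kN; apply: integral_hit_potential_rcons => //.
  + exact: cell_mass_ge0.
  + move=> k'; exact: measurable_itv.
  + by move=> k'; apply: smooth_grid_cell_le; last exact: P_smooth.
- move=> s size_s pot_lt; apply: count_in_lt_deviation_bound => //.
  exact: hit_potential0_lt pot_lt.
Qed.
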